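(* Let $\Gamma$ be a graph such that $\chi(\overline{\Gamma})=k$. Suppose $F$ is a bipartite graph on $k$ vertices which does not contain $K_{s,r}$ as a subgraph, for some integers $2\le s\le r$ with $r\ne 2$. Then $\Gamma$ has a subgraph $G$ with at least $e(\Gamma)e(F)/\binom{k}{2}$ edges that does not contain $K_{s,r}$ as an induced subgraph.
   Context: $\overline{\Gamma}$ is the complement of $\Gamma$ and $\chi$ denotes chromatic number. *)

From mathcomp Require Import all_boot.
Set Implicit Arguments. Unset Strict Implicit. Unset Printing Implicit Defensive.

Section Graphs.
Variable V : finType.

Definition simple_graph (e : rel V) : Prop := symmetric e /\ irreflexive e.

Definition compl_graph (e : rel V) : rel V := fun x y => (x != y) && ~~ e x y.

Definition colorable (e : rel V) (k : nat) : Prop :=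
  exists f : V -> 'I_k, forall x y, e x y -> f x != f y.

Definition chromatic_number_is (e : rel V) (k : nat) : Prop :=
  colorable e k /\ forall j, colorable e j -> k <= j.

Definition nedges (e : rel V) : nat :=
  #|[set E : {set V} | [exists x, exists y, e x y && (E == [set x; y])]]|.

Definition bipartite (e : rel V) : Prop :=
  exists c : V -> bool, forall x y, e x y -> c x != c y.

Definition subgraph (e' e : rel V) : Prop :=
  simple_graph e' /\ forall x y, e' x y -> e x y.

Definition contains_Ksr (e : rel V) (s r : nat) : Prop :=
  exists A B : {set V}, [/\ [disjoint A & B], #|A| = s, #|B| = r &
    forall a b, a \in A -> b \in B -> e a b].

Definition contains_induced_Ksr (e : rel V) (s r : nat) : Prop :=
  exists A B : {set V}, [/\ [disjoint A & B], #|A| = s, #|B| = r &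
    forall a b, a \in A -> b \in B -> e a b] /\ [/\
    forall a a', a \in A -> a' \in A -> ~~ e a a' &
    forall b b', b \in B -> b' \in B -> ~~ e b b'].

End Graphs.

From mathcomp Require Import all_boot.
From mathcomp Require Import fingroup perm.
From mathcomp Require Import zify.

Set Implicit Arguments. Unset Strict Implicit. Unset Printing Implicit Defensive.

(** Fix a proper colouring [f : V -> T] of the complement of Gamma, so that its
  colour classes are cliques of Gamma, and a relabelling [sigma] of the colours.
  Keep the edges of Gamma inside a colour class, and an edge between classes
  [i] and [j] iff [sigma i] and [sigma j] are adjacent in F.  Averaging over all
  [sigma], a fixed edge between distinct classes survives with probability
  [e(F) / 'C(k, 2)], so some [sigma] keeps at least [e(Gamma) e(F) / 'C(k, 2)]
  edges.  An induced K_{s,r} in the resulting graph has independent sides, hence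
  injectively coloured sides.  If two opposite vertices shared a colour, the
  other vertices would give a triangle in the bipartite graph F (this needs
  [r >= 3]); otherwise the colours of the two sides span a K_{s,r} in F. *)

Definition narcs (T : finType) (e : rel T) : nat := \sum_x \sum_y (e x y : nat).

Lemma narcs_simple (T : finType) (e : rel T) :
  simple_graph e -> narcs e = (nedges e).*2.
Proof.
move=> [sym irr]; apply/esym; rewrite /narcs /nedges.
set S := [set E : {set T} | _].
have -> : \sum_x \sum_y (e x y : nat) = \sum_(p : T * T | e p.1 p.2) 1.
  by rewrite pair_big /= [RHS]big_mkcond; apply: eq_bigr => p _; case: (e _ _).
rewrite (partition_big (fun p : T * T => [set p.1; p.2]) (mem S)); last first.
  move=> p ep; suff : [set p.1; p.2] \in S by [].
  rewrite inE; apply/existsP; exists p.1; apply/existsP; exists p.2.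
  by rewrite ep eqxx.
transitivity (\sum_(E in S) 2); first by rewrite sum_nat_const muln2.
apply: eq_bigr => E; rewrite /S inE => /existsP[x /existsP[y /andP[exy /eqP ->]]].
have xy : x != y by apply: contraTneq exy => ->; rewrite irr.
rewrite sum1_card (eq_card (B := [set (x, y); (y, x)])); last first.
  move=> [u v]; rewrite !inE -topredE /=; apply/idP/idP.
  - move=> /andP[/= euv /eqP /= Euv]; move: euv.
    have: u \in [set x; y] by rewrite -Euv !inE eqxx.
    have: v \in [set x; y] by rewrite -Euv !inE eqxx orbT.
    by rewrite !inE => /orP[]/eqP-> /orP[]/eqP->; rewrite ?eqxx ?orbT ?irr.
  - move=> /orP[]/eqP[-> ->] /=; first by rewrite exy eqxx.
    by rewrite sym exy setUC eqxx.
by rewrite cards2 xpair_eqE negb_and xy.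
Qed.

Lemma exists_ge_average (I : finType) (x : I -> nat) (m : nat) :
  0 < #|I| -> #|I| * m <= \sum_i x i -> exists i, m <= x i.
Proof.
move=> I_gt0 le_sum; suff /existsP : [exists i, m <= x i] by [].
apply: contraLR le_sum => /existsPn lt_m; rewrite -ltnNge.
have : \sum_i (x i + 1) <= \sum_(i : I) m.
  by apply: leq_sum => i _; rewrite addn1 ltnNge lt_m.
rewrite big_split /= !sum_nat_const muln1.
rewrite (eq_card (B := I)) // => le_m; apply: leq_trans le_m.
by rewrite -addn1 leq_add2l.
Qed.

Section PermutedRelation.
Variables (T : finType) (F : rel T).

Lemma exists_perm_pair (a b a' b' : T) :
  a != b -> a' != b' -> exists t : {perm T}, t a' = a /\ t b' = b.
Proof.
move=> ab a'b'; pose t1 := tperm a' a.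
have t1b'_a : t1 b' != a.
  by apply: contra a'b' => /eqP t1b'; rewrite -(inj_eq (@perm_inj _ t1)) t1b' tpermL.
exists (t1 * tperm (t1 b') b)%g; rewrite !permM tpermL; split=> //.
by rewrite /t1 tpermL tpermD // eq_sym.
Qed.

Lemma sum_perm_rel_const (a b a' b' : T) : a != b -> a' != b' ->
  \sum_(sg : {perm T}) (F (sg a) (sg b) : nat) =
  \sum_(sg : {perm T}) (F (sg a') (sg b') : nat).
Proof.
move=> ab a'b'; have [t [ta' tb']] := exists_perm_pair ab a'b'.
rewrite [RHS](reindex_inj (mulgI t)) /=.
by apply: eq_bigr => sg _; rewrite !permM ta' tb'.
Qed.

Lemma sum_neq : \sum_(a : T) \sum_(b : T) ((a != b) : nat) = #|T| * #|T|.-1.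
Proof.
rewrite -sum_nat_const; apply: eq_bigr => a _.
rewrite -big_mkcond sum1_card -(cardC1 a); apply: eq_card => b.
by rewrite !inE eq_sym.
Qed.

Hypothesis irrF : irreflexive F.

Lemma narcs_le : narcs F <= #|T| * #|T|.-1.
Proof.
rewrite -sum_neq; apply: leq_sum => a _; apply: leq_sum => b _.
by case: eqVneq => [->|_]; rewrite ?irrF ?leq_b1.
Qed.

(** By [sum_perm_rel_const] the left-hand sum is the same for every pair
  [a != b], hence equals its average over all [#|T| * #|T|.-1] such pairs. *)
Lemma sum_perm_rel (a b : T) : a != b ->
  (\sum_(sg : {perm T}) (F (sg a) (sg b) : nat)) * (#|T| * #|T|.-1) =
  #|{perm T}| * narcs F.
Proof.
move=> ab; rewrite -sum_neq big_distrr /=.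
transitivity (\sum_(a' : T) \sum_(b' : T) \sum_(sg : {perm T}) (F (sg a') (sg b') : nat)).
  apply: eq_bigr => a' _; rewrite big_distrr /=; apply: eq_bigr => b' _.
  case: eqVneq => [->|a'b'] /=; last by rewrite muln1 (sum_perm_rel_const ab a'b').
  by rewrite muln0 big1 // => sg _; rewrite irrF.
under eq_bigr do rewrite exchange_big /=; rewrite exchange_big /=.
rewrite -sum_nat_const; apply: eq_bigr => sg _.
rewrite /narcs [RHS](reindex_inj (h := sg) perm_inj) /=; apply: eq_bigr => x _.
exact: esym (reindex_inj perm_inj).
Qed.

End PermutedRelation.

Lemma exists_notin_image (U W : finType) (g : U -> W) (B : {set U}) (C : {set W}) :
  {in B &, injective g} -> #|C| < #|B| -> exists2 b, b \in B & g b \notin C.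
Proof.
move=> injg ltCB.
suff /exists_inP[b Bb gbC] : [exists b in B, g b \notin C] by exists b.
apply: contraLR ltCB => /exists_inPn noB; rewrite -leqNgt -(card_in_imset injg).
apply: subset_leq_card; apply/subsetP => _ /imsetP[b Bb ->].
by rewrite -[_ \in _]negbK noB.
Qed.

Section PatternGraph.
Variables (V T : finType) (Gamma : rel V) (F : rel T) (g : V -> T).

Definition pattern_graph : rel V :=
  fun x y => Gamma x y && ((g x == g y) || F (g x) (g y)).

Lemma pattern_graph_subgraph :
  simple_graph Gamma -> symmetric F -> subgraph pattern_graph Gamma.
Proof.
move=> [symG irrG] symF; split; last by move=> x y /andP[].
split=> [x y|x]; rewrite /pattern_graph ?irrG //.
by rewrite symG eq_sym symF.
Qed.

Lemma pattern_graph_cross x y : pattern_graph x y -> g x != g y -> F (g x) (g y).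
Proof. by case/andP=> _ /orP[/eqP->|//]; rewrite eqxx. Qed.

Hypothesis g_proper : forall x y, compl_graph Gamma x y -> g x != g y.

Lemma colour_class_clique x y : x != y -> g x = g y -> Gamma x y.
Proof.
move=> xy gxy; apply/negPn/negP => nG.
by move: (@g_proper x y); rewrite /compl_graph xy nG gxy eqxx => /(_ isT).
Qed.

Lemma pattern_graph_stable_inj (A : {set V}) :
  (forall a a', a \in A -> a' \in A -> ~~ pattern_graph a a') -> {in A &, injective g}.
Proof.
move=> stableA a a' Aa Aa' gaa'; apply/eqP; apply: contraLR (stableA a a' Aa Aa') => aa'.
by rewrite /pattern_graph colour_class_clique // gaa' eqxx.
Qed.

Lemma pattern_graph_Ksr_sides_colour_disjoint (A B : {set V}) :
  bipartite F -> 1 < #|A| -> 2 < #|B| ->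
  {in A &, injective g} -> {in B &, injective g} ->
  (forall a b, a \in A -> b \in B -> pattern_graph a b) ->
  forall a b, a \in A -> b \in B -> g a != g b.
Proof.
move=> [c c_proper] A_gt1 B_gt2 injA injB AB a b Aa Bb; apply/eqP => gab.
have cross a0 b0 : a0 \in A -> b0 \in B -> g a0 != g b0 -> F (g a0) (g b0).
  by move=> Aa0 Bb0; apply: pattern_graph_cross; apply: AB.
have [|a' Aa'] := exists_notin_image (C := [set g a]) injA; first by rewrite cards1.
rewrite inE => a'a.
have le_2 : #|[set g a'; g b]| <= 2 by rewrite cards2 ltnS leq_b1.
have [b' Bb'] := exists_notin_image injB (leq_ltn_trans le_2 B_gt2).
rewrite !inE negb_or => /andP[b'a' b'b].
have Fa'b : F (g a') (g b) by apply: cross; rewrite -?gab.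
have Fab' : F (g a) (g b') by apply: cross; rewrite // gab eq_sym.
have Fa'b' : F (g a') (g b') by apply: cross; rewrite // eq_sym.
move: (c_proper _ _ Fa'b) (c_proper _ _ Fab') (c_proper _ _ Fa'b'); rewrite gab.
by case: (c (g a')); case: (c (g b)); case: (c (g b')).
Qed.

Lemma pattern_graph_no_induced_Ksr (s r : nat) :
  bipartite F -> 1 < s -> 2 < r -> ~ contains_Ksr F s r ->
  ~ contains_induced_Ksr pattern_graph s r.
Proof.
move=> bipF s_gt1 r_gt2 noK [A [B [[_ cardA cardB AB] [stableA stableB]]]].
have injA := pattern_graph_stable_inj stableA.
have injB := pattern_graph_stable_inj stableB.
rewrite -cardA -cardB in s_gt1 r_gt2.
have cross := pattern_graph_Ksr_sides_colour_disjoint bipF s_gt1 r_gt2 injA injB AB.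
apply: noK; exists (g @: A), (g @: B); split.
- rewrite disjoint_subset; apply/subsetP => _ /imsetP[a Aa ->]; rewrite !inE.
  by apply/imsetP => -[b Bb /eqP]; apply/negP/cross.
- by rewrite card_in_imset.
- by rewrite card_in_imset.
- move=> _ _ /imsetP[a Aa ->] /imsetP[b Bb ->].
  exact: pattern_graph_cross (AB a b Aa Bb) (cross a b Aa Bb).
Qed.

End PatternGraph.

Section PatternGraphDensity.
Variables (V T : finType) (Gamma : rel V) (F : rel T) (f : V -> T).

Lemma sum_perm_pattern_graph x y : irreflexive F -> Gamma x y ->
  #|{perm T}| * narcs F <=
  (\sum_(sg : {perm T}) (pattern_graph Gamma F (sg \o f) x y : nat)) * (#|T| * #|T|.-1).
Proof.
move=> irrF Gxy; rewrite /pattern_graph /= Gxy.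
under eq_bigr do rewrite (inj_eq perm_inj).
case: eqVneq => [_|fxy] /=.
  by rewrite sum_nat_const muln1 leq_mul2l narcs_le ?orbT.
by rewrite sum_perm_rel.
Qed.

Lemma sum_narcs_pattern_graph : irreflexive F ->
  #|{perm T}| * (narcs Gamma * narcs F) <=
  \sum_(sg : {perm T}) narcs (pattern_graph Gamma F (sg \o f)) * (#|T| * #|T|.-1).
Proof.
move=> irrF; rewrite mulnCA big_distrl /=.
under [X in _ <= X]eq_bigr do rewrite big_distrl /=.
rewrite exchange_big /=; apply: leq_sum => x _.
under [X in _ <= X]eq_bigr do rewrite big_distrl /=.
rewrite big_distrl exchange_big /=; apply: leq_sum => y _.
case: (boolP (Gamma x y)) => [Gxy|_]; last by rewrite mul0n.
by rewrite mul1n -big_distrl sum_perm_pattern_graph.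
Qed.

Lemma exists_perm_dense_pattern_graph :
  simple_graph Gamma -> simple_graph F -> exists sg : {perm T},
  nedges Gamma * nedges F <= nedges (pattern_graph Gamma F (sg \o f)) * 'C(#|T|, 2).
Proof.
move=> simG [symF irrF].
have perm_gt0 : 0 < #|{perm T}| by apply/card_gt0P; exists 1%g.
have [sg dense] := exists_ge_average perm_gt0 (sum_narcs_pattern_graph irrF).
exists sg; move: dense.
have simGsg := (pattern_graph_subgraph (sg \o f) simG symF).1.
rewrite !narcs_simple // -[#|T|.-1]bin1 mul_bin_diag -!mul2n.
nia.
Qed.

End PatternGraphDensity.

Theorem lemma2p1 (V : finType) (Gamma : rel V) (k : nat)
  (F : rel 'I_k) (s r : nat) :
  simple_graph Gamma ->
  chromatic_number_is (compl_graph Gamma) k ->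
  simple_graph F -> bipartite F ->
  2 <= s -> s <= r -> r != 2 ->
  ~ contains_Ksr F s r ->
  exists G : rel V, subgraph G Gamma /\
    nedges Gamma * nedges F <= nedges G * 'C(k, 2) /\
    ~ contains_induced_Ksr G s r.
Proof.
move=> simG [[f f_proper] _] simF bipF s_gt1 le_sr r_neq2 noK.
have [sg dense] := exists_perm_dense_pattern_graph f simG simF.
exists (pattern_graph Gamma F (sg \o f)); split.
  exact: pattern_graph_subgraph simG simF.1.
split; first by rewrite card_ord in dense.
apply: pattern_graph_no_induced_Ksr => //; last by lia.
by move=> x y /f_proper; rewrite /= (inj_eq perm_inj).
Qed.
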